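(* Let $\Gamma=(V,E)$ be a simple graph of order $n$ and let $\mu$ be the algebraic connectivity of $\Gamma$. Then the defensive alliance number of $\Gamma$ satisfies $$a(\Gamma)\ge \left\lceil\frac{n\mu}{n+\mu}\right\rceil$$ and the strong defensive alliance number of $\Gamma$ satisfies $$\hat{a}(\Gamma)\ge \left\lceil\frac{n(\mu+1)}{n+\mu}\right\rceil.$$
   Context: For $S\subseteq V$ and $v\in V$, $N_S(v)=\{u\in S: u\sim v\}$ and $N_{V\setminus S}(v)=\{u\in V\setminus S: u\sim v\}$. A nonempty set $S\subseteq V$ is a defensive alliance if $|N_S(v)|+1\ge |N_{V\setminus S}(v)|$ for every $v\in S$; it is a strong defensive alliance if $|N_S(v)|\ge |N_{V\setminus S}(v)|$ for every $v\in S$. $a(\Gamma)$ (resp. $\hat a(\Gamma)$) is the minimum cardinality of a defensive (resp. strong defensive) alliance in $\Gamma$. The algebraic connectivity is the second smallest eigenvalue of the Laplacian matrix of $\Gamma$. *)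

From HB Require Import structures.
From mathcomp Require Import all_boot all_order all_algebra.
From mathcomp Require Import reals.
Set Implicit Arguments. Unset Strict Implicit. Unset Printing Implicit Defensive.
Import Order.TTheory GRing.Theory Num.Theory.
Local Open Scope ring_scope.

Definition simple_graph (V : finType) (e : rel V) : Prop :=
  symmetric e /\ irreflexive e.

Definition nbhd_in (V : finType) (e : rel V) (S : {set V}) (v : V) : {set V} :=
  [set u in S | e u v].

Definition deg (V : finType) (e : rel V) (v : V) : nat := #|nbhd_in e [set: V] v|.

Definition defensive_alliance (V : finType) (e : rel V) (S : {set V}) : bool :=
  (S != set0) &&
  [forall v in S, #|nbhd_in e (~: S) v| <= #|nbhd_in e S v| + 1]%N.

Definition strong_defensive_alliance (V : finType) (e : rel V) (S : {set V}) : bool :=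
  (S != set0) &&
  [forall v in S, #|nbhd_in e (~: S) v| <= #|nbhd_in e S v|]%N.

(* minimum cardinality of a (strong) defensive alliance; V itself is always one
   when V is nonempty, so the default value #|V| never exceeds the true minimum. *)
Definition alliance_number (V : finType) (e : rel V) : nat :=
  \big[minn/#|V|]_(S : {set V} | defensive_alliance e S) #|S|.

Definition strong_alliance_number (V : finType) (e : rel V) : nat :=
  \big[minn/#|V|]_(S : {set V} | strong_defensive_alliance e S) #|S|.

Definition laplacian (R : nzRingType) (V : finType) (e : rel V) : 'M[R]_#|V| :=
  \matrix_(i, j) (if i == j then (deg e (enum_val i))%:R
                  else - (e (enum_val i) (enum_val j))%:R).

(* mu is the second smallest eigenvalue (with multiplicity) of the Laplacian:
   the eigenvalues, listed in nondecreasing order as s (so that the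
   characteristic polynomial is prod_(x <- s) (X - x)), have s_1 = mu. *)
Definition algebraic_connectivity (R : realType) (V : finType) (e : rel V) (mu : R) : Prop :=
  exists s : seq R,
    [/\ sorted <=%R s,
        char_poly (laplacian R e) = \prod_(x <- s) ('X - x%:P)
      & nth 0 s 1 = mu].

From HB Require Import structures.
From mathcomp Require Import all_boot all_order all_algebra.
From mathcomp Require Import reals.
From mathcomp Require Import complex ring lra.

(* For a vertex set S with |S| = s, the vector f = n 1_S - s 1 is orthogonal to
   the all-ones kernel vector of the Laplacian L, and every eigenvalue of L but
   the zero one is at least mu, so mu |f|^2 <= f^T L f, i.e.
   mu n s (n - s) <= n^2 d(S), where d(S) counts the edges leaving S.  In a
   defensive alliance each vertex of S has at most s outside neighbours, so
   d(S) <= s^2; in a strong one at most s - 1, so d(S) <= s (s - 1).  Solving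
   for s gives the two bounds. *)

Set Implicit Arguments. Unset Strict Implicit. Unset Printing Implicit Defensive.
Import Order.TTheory GRing.Theory Num.Theory.
Local Open Scope ring_scope.

Section Rayleigh.
Local Open Scope sesquilinear_scope.

Lemma char_poly_similar (F : fieldType) n (P A : 'M[F]_n) :
  P \in unitmx -> char_poly (invmx P *m A *m P) = char_poly A.
Proof.
move=> Pu; rewrite /char_poly /char_poly_mx.
have -> : 'X%:M - map_mx polyC (invmx P *m A *m P) =
    map_mx polyC (invmx P) *m ('X%:M - map_mx polyC A) *m map_mx polyC P.
  rewrite mulmxBr mulmxBl !map_mxM; congr (_ - _).
  by rewrite scalar_mxC -mulmxA -map_mxM mulVmx // map_mx1 mulmx1.
rewrite !det_mulmx !det_map_mx mulrC mulrA -rmorphM -det_mulmx mulmxV //.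
by rewrite det1 rmorph1 mul1r.
Qed.

Lemma count_le1_inj (I : finType) (T : Type) (p : pred T) (d : I -> T) :
  (count p [seq d k | k <- enum I] <= 1)%N ->
  forall i j, p (d i) -> p (d j) -> i = j.
Proof.
rewrite count_map enumT.
have -> : count (preim d p) (Finite.enum I) = #|[pred k | p (d k)]|.
  by rewrite cardE size_filter.
by move=> /card_le1_eqP le1 i j pi pj; apply: le1.
Qed.

Lemma diag_rayleigh (C : numClosedFieldType) N (d y z : 'rV[C]_N) (mu : C) :
  0 < mu -> (forall i j, ~~ (mu <= d 0 i) -> ~~ (mu <= d 0 j) -> i = j) ->
  z *m diag_mx d = 0 -> z != 0 -> (y *m z^t*) 0 0 = 0 ->
  mu * (y *m y^t*) 0 0 <= (y *m diag_mx d *m y^t*) 0 0.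
Proof.
move=> mu_gt0 one_small zd0 z_neq0 yz0.
rewrite mul_mx_diag !mxE mulr_sumr -subr_ge0 -sumrB; apply: sumr_ge0 => i _.
rewrite !mxE mulrAC [mu * _]mulrC -mulrBr.
have [le_mu|small] := boolP (mu <= d 0 i).
  by rewrite mulr_ge0 ?subr_ge0 ?mul_conjC_ge0.
(* [z] lives on the only eigenvalue below [mu], so [y _|_ z] kills that term. *)
have z_off j : j != i -> z 0 j = 0.
  move=> ji; have /rowP/(_ j)/eqP := zd0; rewrite mul_mx_diag !mxE mulf_eq0.
  case/orP=> [/eqP //|/eqP dj0].
  have : mu <= d 0 j by apply: contraNT ji => /(one_small _ _ small) ->.
  by rewrite dj0 => /(lt_le_trans mu_gt0); rewrite ltxx.
have z_i : z 0 i != 0.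
  apply: contraNneq z_neq0 => zi0; apply/eqP/rowP => j; rewrite mxE.
  by have [->|/z_off] := eqVneq j i.
suff y_i0 : y 0 i = 0 by rewrite y_i0 !mul0r.
move: yz0; rewrite !mxE (bigD1 i) //= big1 => [|j ji]; last first.
  by rewrite !mxE z_off // conjC0 mulr0.
by rewrite addr0 !mxE => /eqP; rewrite mulf_eq0 conjC_eq0 (negPf z_i) orbF => /eqP.
Qed.

Lemma perm_spectral_diag (C : numClosedFieldType) N (A : 'M[C]_N) (s : seq C) :
  A \is normalmx -> char_poly A = \prod_(x <- s) ('X - x%:P) ->
  perm_eq [seq spectral_diag A 0 i | i <- enum 'I_N] s.
Proof.
move=> A_normal charA; have A_diag := elimT (@orthomx_spectralP C N A) A_normal.
apply/allP => c _ /=; apply/eqP.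
rewrite -!mu_prod_XsubC -charA [in char_poly A]A_diag.
rewrite char_poly_similar ?spectral_unit //.
rewrite char_poly_trig ?diag_mx_is_trig // big_map big_enum /=.
by congr (mup _ _); apply: eq_bigr => i _; rewrite mxE eqxx mulr1n.
Qed.

Lemma normal_rayleigh (C : numClosedFieldType) N (A : 'M[C]_N) (s : seq C)
    (mu : C) (w x : 'rV[C]_N) :
  A \is normalmx -> char_poly A = \prod_(a <- s) ('X - a%:P) ->
  (count (fun a => ~~ (mu <= a)%R) s <= 1)%N -> 0 < mu ->
  w *m A = 0 -> w != 0 -> (x *m w^t*) 0 0 = 0 ->
  mu * (x *m x^t*) 0 0 <= (x *m A *m x^t*) 0 0.
Proof.
move=> A_normal charA small_le1 mu_gt0 wA w_neq0 xw.
have /count_le1_inj one_small : (count (fun a => ~~ (mu <= a)%R)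
    [seq spectral_diag A 0%R i | i <- enum 'I_N] <= 1)%N.
  by rewrite (permP (perm_spectral_diag A_normal charA)).
have := elimT (@orthomx_spectralP C N A) A_normal.
set U := spectralmx A; set d := spectral_diag A => A_diag.
have U_unitary : U \is unitarymx := spectral_unitarymx A.
have UUt : U *m U^t* = 1%:M := unitarymxP U_unitary.
have UtU : U^t* *m U = 1%:M by rewrite -invmx_unitary ?mulVmx ?spectral_unit.
rewrite invmx_unitary // in A_diag.
have conj_form (a b : 'rV[C]_N) M :
    a *m (U^t* *m M *m U) *m b^t* = (a *m U^t*) *m M *m (b *m U^t*)^t*.
  by rewrite trmx_mul map_mxM trmxCK !mulmxA.
have unit_form (a b : 'rV[C]_N) : a *m b^t* = (a *m U^t*) *m 1%:M *m (b *m U^t*)^t*.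
  by rewrite -conj_form mulmx1 UtU mulmx1.
rewrite A_diag conj_form unit_form mulmx1.
move: xw; rewrite unit_form mulmx1.
apply: diag_rayleigh => //.
  have := congr1 (fun M => M *m U^t*) wA.
  by rewrite A_diag !mulmxA mul0mx -mulmxA UUt mulmx1 => ->.
apply: contraNneq w_neq0 => wU0.
by rewrite -[w]mulmx1 -UtU mulmxA wU0 mul0mx.
Qed.

Lemma conjmx_real_complex (R : rcfType) m n (M : 'M[R]_(m, n)) :
  (map_mx (real_complex R) M)^t* = map_mx (real_complex R) M^T.
Proof. by apply/matrixP => i j; rewrite !mxE; exact: conjc_real. Qed.

Lemma sym_rayleigh (R : rcfType) N (A : 'M[R]_N) (s : seq R) (mu : R)
    (w x : 'rV[R]_N) :
  A^T = A -> char_poly A = \prod_(a <- s) ('X - a%:P) ->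
  (count (fun a => ~~ (mu <= a)%R) s <= 1)%N -> 0 < mu ->
  w *m A = 0 -> w != 0 -> (x *m w^T) 0 0 = 0 ->
  mu * (x *m x^T) 0 0 <= (x *m A *m x^T) 0 0.
Proof.
move=> A_sym charA small_le1 mu_gt0 wA w_neq0 xw.
(* The spectral theorem of MathComp needs an algebraically closed field. *)
pose f := real_complex R.
have := @normal_rayleigh _ _ (map_mx f A) (map f s) (f mu) (map_mx f w) (map_mx f x).
rewrite !conjmx_real_complex -!map_mxM !mxE -rmorphM lecR; apply.
- by apply/normalmxP; rewrite conjmx_real_complex A_sym.
- rewrite -map_char_poly charA rmorph_prod big_map.
  by apply: eq_bigr => y _; rewrite /= map_polyXsubC.
- by rewrite count_map; under eq_count do rewrite /= lecR.
- by rewrite ltcR.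
- by rewrite wA map_mx0.
- by rewrite map_mx_eq0.
- by move: xw; rewrite mxE => ->.
Qed.

End Rayleigh.

Lemma sorted_count_lt_nth1 (disp : Order.disp_t) (T : porderType disp) (x0 : T)
    (s : seq T) :
  sorted <=%O s -> (count (fun x => ~~ (nth x0 s 1 <= x)%O) s <= 1)%N.
Proof.
case: s => [|a [|b t]] //=; first by case: (~~ _).
move=> /andP[_ /(order_path_min le_trans) /allP b_le].
have -> : count (fun x => ~~ (b <= x)%O) t = 0%N.
  by apply/eqP; rewrite -leqn0 leqNgt -has_count; apply/hasPn => x /b_le ->.
by rewrite lexx addn0; case: (~~ _).
Qed.

Section LaplacianForm.
Variables (R : realFieldType) (V : finType) (e : rel V).
Hypotheses (e_sym : symmetric e) (e_irr : irreflexive e).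

Definition vertex_row (f : V -> R) : 'rV[R]_#|V| := \row_i f (enum_val i).

Definition laplacian_form (f : V -> R) : R :=
  \sum_v f v * \sum_u (e u v)%:R * (f v - f u).

Lemma natr_card (A : {pred V}) : #|A|%:R = \sum_u (u \in A)%:R :> R.
Proof.
by rewrite -sum1_card natr_sum big_mkcond; apply: eq_bigr => u _; case: (u \in A).
Qed.

Lemma natr_deg v : (deg e v)%:R = \sum_u (e u v)%:R :> R.
Proof. by rewrite /deg /nbhd_in natr_card; apply: eq_bigr => u _; rewrite !inE. Qed.

Lemma sum_enum_val (F : V -> R) : \sum_(i < #|V|) F (enum_val i) = \sum_v F v.
Proof. by rewrite -big_enum_val. Qed.

Lemma vertex_row_dot (f g : V -> R) :
  (vertex_row f *m (vertex_row g)^T) 0 0 = \sum_v f v * g v.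
Proof.
rewrite mxE; under eq_bigr do rewrite !mxE.
exact: (sum_enum_val (fun v => f v * g v)).
Qed.

Lemma laplacianE i j :
  laplacian R e i j = (enum_val i == enum_val j)%:R * (deg e (enum_val j))%:R
                      - (e (enum_val i) (enum_val j))%:R.
Proof.
rewrite mxE (inj_eq enum_val_inj); case: eqP => [->|_].
  by rewrite e_irr mul1r subr0.
by rewrite mul0r sub0r.
Qed.

Lemma laplacian_row (f : V -> R) :
  vertex_row f *m laplacian R e =
  vertex_row (fun v => \sum_u (e u v)%:R * (f v - f u)).
Proof.
apply/rowP => j; rewrite !mxE; set v := enum_val j.
under eq_bigr => i _ do rewrite laplacianE !mxE -/v.
rewrite (sum_enum_val (fun u => f u * ((u == v)%:R * (deg e v)%:R - (e u v)%:R))).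
under eq_bigr do rewrite mulrBr.
rewrite sumrB (bigD1 v) //= eqxx mul1r big1 => [|u /negPf->]; last first.
  by rewrite mul0r mulr0.
rewrite addr0 natr_deg mulr_sumr -sumrB; apply: eq_bigr => u _.
by rewrite mulrBr [f v * _]mulrC [f u * _]mulrC.
Qed.

Lemma laplacian_formE (f : V -> R) :
  (vertex_row f *m laplacian R e *m (vertex_row f)^T) 0 0 = laplacian_form f.
Proof.
by rewrite laplacian_row vertex_row_dot; apply: eq_bigr => v _; rewrite mulrC.
Qed.

Lemma laplacian_form_sqr (f : V -> R) :
  2 * laplacian_form f = \sum_u \sum_v (e u v)%:R * (f u - f v) ^+ 2.
Proof.
have -> : laplacian_form f = \sum_u \sum_v f u * ((e v u)%:R * (f u - f v)).
  by apply: eq_bigr => u _; rewrite mulr_sumr.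
rewrite mulr2n mulrDl mul1r [X in _ + X]exchange_big -big_split /=.
apply: eq_bigr => u _; rewrite -big_split /=; apply: eq_bigr => v _.
rewrite (e_sym v u); ring.
Qed.

Lemma laplacian_form_ge0 (f : V -> R) : 0 <= laplacian_form f.
Proof.
rewrite -(pmulr_rge0 _ (ltr0Sn R 1)) laplacian_form_sqr.
by apply: sumr_ge0 => u _; apply: sumr_ge0 => v _; rewrite mulr_ge0 ?ler0n ?sqr_ge0.
Qed.

Lemma tr_laplacian : (laplacian R e)^T = laplacian R e.
Proof.
apply/matrixP => i j; rewrite mxE !laplacianE.
have [->//|ji] := eqVneq (enum_val j) (enum_val i).
by rewrite !mul0r e_sym.
Qed.

Lemma const_row_laplacian : vertex_row (fun=> 1) *m laplacian R e = 0.
Proof.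
rewrite laplacian_row; apply/rowP => j; rewrite !mxE big1 // => u _.
by rewrite subrr mulr0.
Qed.

Lemma vertex_row_enum_rank (x : 'rV[R]_#|V|) :
  vertex_row (fun u => x 0 (enum_rank u)) = x.
Proof. by apply/rowP => i; rewrite mxE enum_valK. Qed.

Lemma sum_sqr_gt0 (f : V -> R) : vertex_row f != 0 -> 0 < \sum_v f v * f v.
Proof.
have f_sqr_ge0 v : 0 <= f v * f v by rewrite -expr2 sqr_ge0.
move=> f_neq0; rewrite lt_def sumr_ge0 ?andbT //.
apply: contra f_neq0; rewrite psumr_eq0 // => /allP f0.
apply/eqP/rowP => i; have := f0 (enum_val i) (mem_index_enum _).
by rewrite !mxE mulf_eq0 orbb => /eqP.
Qed.

Lemma laplacian_eigen_ge0 (a : R) : root (char_poly (laplacian R e)) a -> 0 <= a.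
Proof.
rewrite -eigenvalue_root_char => /eigenvalueP [x].
rewrite -(vertex_row_enum_rank x); set f := fun u => _ => fL f_neq0.
have := laplacian_formE f; rewrite fL -scalemxAl mxE vertex_row_dot => form_eq.
by rewrite -(pmulr_lge0 _ (sum_sqr_gt0 f_neq0)) form_eq laplacian_form_ge0.
Qed.

Definition cut_size (S : {set V}) : nat := \sum_(u in S) #|nbhd_in e (~: S) u|.

Definition centered_indicator (S : {set V}) (u : V) : R :=
  #|V|%:R * (u \in S)%:R - #|S|%:R.

Lemma sum_centered_indicator S : \sum_u centered_indicator S u = 0.
Proof.
by rewrite sumrB -mulr_sumr -natr_card sumr_const mulrC mulr_natr subrr.
Qed.

Lemma sum_centered_indicator_sqr S :
  \sum_u centered_indicator S u * centered_indicator S u =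
  #|V|%:R * #|S|%:R * (#|V|%:R - #|S|%:R).
Proof.
set n : R := #|V|%:R; set s : R := #|S|%:R.
have sqrE u : centered_indicator S u * centered_indicator S u =
    (n ^+ 2 - 2 * n * s) * (u \in S)%:R + s ^+ 2.
  by rewrite /centered_indicator -/n -/s; case: (u \in S) => /=; ring.
under eq_bigr do rewrite sqrE.
rewrite big_split /= -mulr_sumr -natr_card sumr_const -[s ^+ 2 *+ _]mulr_natr -/n.
ring.
Qed.

Lemma natr_cut_size S :
  (cut_size S)%:R = \sum_u \sum_v [&& u \in S, v \notin S & e u v]%:R :> R.
Proof.
rewrite natr_sum big_mkcond /=; apply: eq_bigr => u _.
have [uS|uNS] := boolP (u \in S); last by rewrite big1.
by rewrite natr_card; apply: eq_bigr => v _; rewrite !inE e_sym.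
Qed.

Lemma laplacian_form_centered_indicator S :
  laplacian_form (centered_indicator S) = #|V|%:R ^+ 2 * (cut_size S)%:R.
Proof.
set n : R := #|V|%:R.
have sqrE u v : (e u v)%:R * (centered_indicator S u - centered_indicator S v) ^+ 2 =
    n ^+ 2 * [&& u \in S, v \notin S & e u v]%:R +
    n ^+ 2 * [&& v \in S, u \notin S & e v u]%:R.
  rewrite /centered_indicator -/n (e_sym v u).
  by case: (u \in S); case: (v \in S); case: (e u v) => /=; ring.
apply: (@mulfI _ 2); first by rewrite pnatr_eq0.
rewrite laplacian_form_sqr; under eq_bigr do under eq_bigr do rewrite sqrE.
under eq_bigr do rewrite big_split /=.
rewrite big_split /= [X in _ + X]exchange_big /= -mulr2n mulr_natl natr_cut_size.
by congr (_ *+ 2); rewrite mulr_sumr; apply: eq_bigr => u _; rewrite mulr_sumr.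
Qed.

End LaplacianForm.

Lemma laplacian_cut_bound (R : rcfType) (V : finType) (e : rel V) (s : seq R)
    (mu : R) (S : {set V}) :
  symmetric e -> irreflexive e ->
  char_poly (laplacian R e) = \prod_(x <- s) ('X - x%:P) ->
  (count (fun x => ~~ (mu <= x)%R) s <= 1)%N -> 0 <= mu -> (0 < #|V|)%N ->
  mu * (#|V|%:R * #|S|%:R * (#|V|%:R - #|S|%:R)) <=
  #|V|%:R ^+ 2 * (cut_size e S)%:R.
Proof.
move=> e_sym e_irr charL small_le1 mu_ge0 V_gt0.
rewrite -sum_centered_indicator_sqr -laplacian_form_centered_indicator //.
have [->|mu_neq0] := eqVneq mu 0; first by rewrite mul0r laplacian_form_ge0.
rewrite -vertex_row_dot -laplacian_formE //.
apply: sym_rayleigh (tr_laplacian _ e_sym e_irr) charL small_le1 _ _ _ _.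
- by rewrite lt_def mu_neq0.
- exact: const_row_laplacian.
- apply/eqP => /rowP /(_ (Ordinal V_gt0)); rewrite !mxE => /eqP.
  by rewrite oner_eq0.
- rewrite vertex_row_dot; under eq_bigr do rewrite mulr1.
  exact: sum_centered_indicator.
Qed.

Section Alliance.
Variables (V : finType) (e : rel V).
Hypothesis e_irr : irreflexive e.

Lemma card_nbhd_in_lt (S : {set V}) u : u \in S -> (#|nbhd_in e S u| < #|S|)%N.
Proof.
move=> uS; apply: proper_card; rewrite properE; apply/andP; split.
  by apply/subsetP => v; rewrite inE => /andP[].
by apply/subsetPn; exists u; rewrite // inE uS e_irr.
Qed.

Lemma cut_size_defensive (S : {set V}) :
  defensive_alliance e S -> (cut_size e S <= #|S| * #|S|)%N.
Proof.
case/andP=> _ /forallP defS; rewrite /cut_size -sum_nat_const.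
apply: leq_sum => u uS; apply: leq_trans (implyP (defS u) uS) _.
by rewrite addn1 card_nbhd_in_lt.
Qed.

Lemma cut_size_strong (S : {set V}) :
  strong_defensive_alliance e S -> (cut_size e S + #|S| <= #|S| * #|S|)%N.
Proof.
case/andP=> _ /forallP defS; rewrite /cut_size -sum_nat_const.
rewrite -[X in (_ + X <= _)%N]sum1_card -big_split /=.
apply: leq_sum => u uS; rewrite addn1.
exact: leq_ltn_trans (implyP (defS u) uS) (card_nbhd_in_lt uS).
Qed.

Lemma nbhd_in0 v : nbhd_in e set0 v = set0.
Proof. by apply/setP => u; rewrite !inE. Qed.

Lemma defensive_alliance_setT : (0 < #|V|)%N -> defensive_alliance e [set: V].
Proof.
move=> V_gt0; rewrite /defensive_alliance -card_gt0 cardsT V_gt0 /=.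
by apply/forallP => v; apply/implyP => _; rewrite setCT nbhd_in0 cards0.
Qed.

Lemma strong_defensive_alliance_setT :
  (0 < #|V|)%N -> strong_defensive_alliance e [set: V].
Proof.
move=> V_gt0; rewrite /strong_defensive_alliance -card_gt0 cardsT V_gt0 /=.
by apply/forallP => v; apply/implyP => _; rewrite setCT nbhd_in0 cards0.
Qed.

End Alliance.

Lemma alliance_card_ge (R : realFieldType) (n mu s c t : R) :
  0 < n -> 0 < s -> 0 <= mu ->
  mu * (n * s * (n - s)) <= n ^+ 2 * c -> c + t * s <= s * s ->
  n * (mu + t) / (n + mu) <= s.
Proof.
move=> n_gt0 s_gt0 mu_ge0 cut_ge cut_le.
have : mu * (n * s * (n - s)) <= n ^+ 2 * (s * (s - t)).
  by apply: le_trans cut_ge _; rewrite ler_pM2l ?exprn_gt0 //; lra.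
have ns_gt0 : 0 < n * s by rewrite mulr_gt0.
rewrite ler_pdivrMr; last by lra.
nra.
Qed.

Lemma bigmin_card_ge (T : finType) (P : pred {set T}) (c : int) :
  P [set: T] -> (forall S, P S -> c <= #|S|%:Z) ->
  c <= (\big[minn/#|T|]_(S | P S) #|S|)%:Z.
Proof.
move=> PT c_le; apply: (big_ind (fun k : nat => c <= k%:Z)).
- by rewrite -cardsT c_le.
- by move=> a b; rewrite /minn; case: ltnP.
- exact: c_le.
Qed.

Theorem theorem1 (R : realType) (V : finType) (e : rel V) (mu : R) :
  simple_graph e -> (1 < #|V|)%N -> algebraic_connectivity e mu ->
  let n : R := (#|V|)%:R in
  (Num.ceil (n * mu / (n + mu)) <= (alliance_number e)%:Z)%R /\
  (Num.ceil (n * (mu + 1) / (n + mu)) <= (strong_alliance_number e)%:Z)%R.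
Proof.
move=> [e_sym e_irr] V_gt1 [s [s_sorted charL mu_def]] n.
have V_gt0 : (0 < #|V|)%N by apply: ltnW.
have mu_ge0 : 0 <= mu.
  apply: (laplacian_eigen_ge0 e_sym e_irr); rewrite charL root_prod_XsubC -mu_def.
  rewrite mem_nth //; move: (size_char_poly (laplacian R e)).
  by rewrite charL size_prod_XsubC => -[->].
have small_le1 : (count (fun x => ~~ (mu <= x)%R) s <= 1)%N.
  by rewrite -mu_def sorted_count_lt_nth1.
have card_ge (t : nat) S : S != set0 ->
    (cut_size e S + t * #|S| <= #|S| * #|S|)%N ->
    n * (mu + t%:R) / (n + mu) <= #|S|%:R.
  move=> S_neq0 cut_le; apply: (alliance_card_ge _ _ mu_ge0).
  - by rewrite ltr0n.
  - by rewrite ltr0n card_gt0.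
  - exact: laplacian_cut_bound e_sym e_irr charL small_le1 mu_ge0 V_gt0.
  - by rewrite -!natrM -natrD ler_nat.
split; apply: bigmin_card_ge => [|S /[dup] /andP[S_neq0 _]].
- exact: defensive_alliance_setT.
- move=> /(cut_size_defensive e_irr) cut_le; rewrite ceil_le_int -{1}(addr0 mu).
  by apply: (card_ge 0%N); rewrite ?mul0n ?addn0.
- exact: strong_defensive_alliance_setT.
- move=> /(cut_size_strong e_irr) cut_le; rewrite ceil_le_int.
  by apply: (card_ge 1%N); rewrite ?mul1n.
Qed.
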